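(* Let $G$ be a finite directed graph and $R\subseteq V(G)$. Let $F_i$ and $F_k$ be maximal faces of $\mathrm{DT}_R(G)$, and let $(x\rightarrow y)\in F_i\setminus F_k$ be an edge that is nice in $\mathrm{DT}_R(G)$. Then there is a maximal face $F_j$ of $\mathrm{DT}_R(G)$ and an $e\in F_k$ such that $F_i\cap F_k\subseteq F_j\cap F_k=F_k\setminus\{e\}$.
   Context: A directed forest in $G$ is a set of edges of $G$ which, viewed as a graph on $V(G)$, is acyclic and has at most one edge directed to each vertex; its roots are the vertices with no forest edge directed to them. $\mathrm{DT}(G)$ is the simplicial complex with vertex set $E(G)$ whose simplices are the directed forests; $\mathrm{DT}_R(G)$ is the subcomplex generated by the directed forests with root set exactly $R$. An edge $(x\rightarrow y)$ of $G$ is nice in a subcomplex $\Delta$ of $\mathrm{DT}(G)$ if (i) there is an edge $(z\rightarrow y)$ in $\Delta$ with $z\ne x$, and (ii) every forest $F\in\Delta$ without an edge directed to $y$ satisfies $F\cup\{(x\rightarrow y)\}\in\Delta$. *)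

From mathcomp Require Import all_boot.
Set Implicit Arguments. Unset Strict Implicit. Unset Printing Implicit Defensive.

(* A finite directed graph G is given by a finite vertex type V (V(G) = all of V)
   and an edge set E : {set V * V}; the pair (x, y) is the edge (x -> y).
   Sets of edges are elements of {set V * V}. *)

Section DT.
Variable V : finType.
Implicit Types (E F : {set V * V}) (R : {set V}).

Definition joins (e : V * V) (a b : V) : bool :=
  ((e.1 == a) && (e.2 == b)) || ((e.1 == b) && (e.2 == a)).

(* An (undirected) cycle in the edge set F: pairwise distinct vertices
   v_0, ..., v_{k-1} (k >= 1) and pairwise distinct edges e_0, ..., e_{k-1} of F
   such that e_i joins v_i and v_{(i+1) mod k}.  (k = 1 : a loop; k = 2 : two
   distinct edges between the same two vertices, e.g. (x->y) and (y->x).) *)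
Definition undirected_cycle F (vs : seq V) (es : seq (V * V)) : Prop :=
  [/\ 0 < size vs, size es = size vs, uniq vs, uniq es &
      {subset es <= F} /\
      forall (x0 : V) i, i < size vs ->
        joins (nth (x0, x0) es i) (nth x0 vs i) (nth x0 vs (i.+1 %% size vs))].

Definition acyclic F : Prop := forall vs es, ~ undirected_cycle F vs es.

Definition directed_forest E F : Prop :=
  [/\ F \subset E, acyclic F &
      forall y : V, #|[set e in F | e.2 == y]| <= 1].

Definition roots F : {set V} := [set v | [forall e in F, e.2 != v]].

Definition DT E (F : {set V * V}) : Prop := directed_forest E F.

Definition DT_R E R (F : {set V * V}) : Prop :=
  exists F', [/\ directed_forest E F', roots F' = R & F \subset F'].

Definition maximal_face (Delta : {set V * V} -> Prop) F : Prop :=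
  Delta F /\ forall F', Delta F' -> F \subset F' -> F' = F.

Definition nice E (Delta : {set V * V} -> Prop) (x y : V) : Prop :=
  [/\ (x, y) \in E,
      (exists z : V, z != x /\ Delta [set (z, y)]) &
      forall F, Delta F -> [forall e in F, e.2 != y] -> Delta ((x, y) |: F)].
End DT.

From Pilot Require Import Defs.
From mathcomp Require Import all_boot.

Set Implicit Arguments. Unset Strict Implicit. Unset Printing Implicit Defensive.

(* The maximal faces of DT_R(G) are exactly the directed forests with root set
   R.  Since (x -> y) is nice, some such forest has an edge into y, so y is not
   a root of F_k and F_k has a unique edge e into y; e is not in F_i, which
   already contains (x -> y).  Removing e from F_k frees y, so niceness adds
   (x -> y) back, and any maximal face F_j containing the result misses e and
   meets F_k in exactly F_k \ e. *)

Lemma setI_eq_setD1 (T : finType) (A B : {set T}) (a : T) :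
  a \notin A -> B :\ a \subset A -> A :&: B = B :\ a.
Proof.
move=> aA sBA; apply/eqP; rewrite eqEsubset subsetI sBA subD1set !andbT.
apply/subsetP => b /setIP [bA bB]; rewrite !inE bB andbT.
by apply: contraNneq aA => <-.
Qed.

Section DirectedForests.
Variable V : finType.
Implicit Types (E F G : {set V * V}) (R : {set V}).

Lemma directed_forest_head_inj E F (e1 e2 : V * V) :
  directed_forest E F -> e1 \in F -> e2 \in F -> e1.2 = e2.2 -> e1 = e2.
Proof.
case=> _ _ indeg e1F e2F e12.
by apply: (card_le1_eqP (indeg e2.2)); rewrite inE ?e1F ?e2F ?e12 eqxx.
Qed.

Lemma directed_forest_same_head_notin E F (a b : V * V) :
  directed_forest E F -> a \in F -> b != a -> b.2 = a.2 -> b \notin F.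
Proof.
move=> forF aF ba hb; apply: contra ba => bF.
by rewrite (directed_forest_head_inj forF bF aF hb).
Qed.

Lemma directed_forest_setD1_head E F (e : V * V) :
  directed_forest E F -> e \in F -> [forall a in F :\ e, a.2 != e.2].
Proof.
move=> forF eF; apply/forall_inP => a /setD1P [ae aF].
by apply: contra ae => /eqP ha; rewrite (directed_forest_head_inj forF aF eF ha).
Qed.

(* [Defs.roots] is qualified because fingraph's [roots] shadows it. *)
Lemma rootsPn F (v : V) : reflect (exists2 e, e \in F & e.2 = v) (v \notin Defs.roots F).
Proof.
rewrite inE negb_forall; apply: (iffP existsP) => [[e]|[e eF ev]].
  by rewrite negb_imply negbK => /andP [eF /eqP ev]; exists e.
by exists e; rewrite eF ev eqxx.
Qed.

Lemma DT_R_head_notin_roots E R F (e : V * V) :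
  DT_R E R F -> e \in F -> e.2 \notin R.
Proof.
move=> [F' [_ <- sFF']] eF; apply/rootsPn.
by exists e; first exact: (subsetP sFF').
Qed.

Lemma DT_R_subset E R F G : DT_R E R F -> G \subset F -> DT_R E R G.
Proof.
move=> [F' [forF' rF' sFF']] sGF.
by exists F'; split=> //; apply: subset_trans sFF'.
Qed.

Lemma maximal_DT_RP E R F :
  maximal_face (DT_R E R) F <-> directed_forest E F /\ Defs.roots F = R.
Proof.
split=> [[[F' [forF' rF' sFF']] maxF]|[forF rF]].
  by rewrite -(maxF F' _ sFF'); last by exists F'; split.
split=> [|F' DF' sFF']; first by exists F; split.
have [G [forG rG sF'G]] := DF'.
apply/eqP; rewrite eqEsubset sFF' andbT; apply/subsetP => e eF'.
have /rootsPn [a aF ae] : e.2 \notin Defs.roots F.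
  by rewrite rF (DT_R_head_notin_roots DF').
have eG : e \in G := subsetP sF'G e eF'.
have aG : a \in G := subsetP sF'G a (subsetP sFF' a aF).
by rewrite (directed_forest_head_inj forG eG aG (esym ae)).
Qed.

Lemma DT_R_maximal_extension E R F :
  DT_R E R F -> exists2 G, maximal_face (DT_R E R) G & F \subset G.
Proof.
move=> [G [forG rG sFG]]; exists G => //.
exact/maximal_DT_RP.
Qed.

End DirectedForests.

Theorem lemma2p8 (V : finType) (E : {set V * V}) (R : {set V})
    (Fi Fk : {set V * V}) (x y : V) :
  maximal_face (DT_R E R) Fi ->
  maximal_face (DT_R E R) Fk ->
  (x, y) \in Fi :\: Fk ->
  nice E (DT_R E R) x y ->
  exists Fj : {set V * V}, exists2 e : V * V,
    maximal_face (DT_R E R) Fj /\ e \in Fk &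
    Fi :&: Fk \subset Fj :&: Fk /\ Fj :&: Fk = Fk :\ e.
Proof.
move=> /maximal_DT_RP [forFi _] maxFk /setDP [xyFi xyFk] [_ [z [_ Dzy]] add_xy].
have /maximal_DT_RP [forFk rFk] := maxFk.
have /rootsPn [e eFk ey] : y \notin Defs.roots Fk.
  by rewrite rFk; exact: (DT_R_head_notin_roots Dzy (set11 (z, y))).
have e_xy : e != (x, y) by apply: contraNneq xyFk => <-.
have eFi := directed_forest_same_head_notin forFi xyFi e_xy ey.
have DFk_e : DT_R E R (Fk :\ e) by apply: DT_R_subset (subD1set Fk e); case: maxFk.
have Dxy : DT_R E R ((x, y) |: (Fk :\ e)).
  by apply: add_xy; rewrite // -ey (directed_forest_setD1_head forFk).
have [Fj maxFj sFj] := DT_R_maximal_extension Dxy.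
have /maximal_DT_RP [forFj _] := maxFj.
have xyFj : (x, y) \in Fj by rewrite (subsetP sFj) ?setU11.
have eFj := directed_forest_same_head_notin forFj xyFj e_xy ey.
have FjFk : Fj :&: Fk = Fk :\ e.
  by apply: setI_eq_setD1 => //; apply: subset_trans sFj; apply: subsetUr.
exists Fj, e => //; rewrite FjFk; split=> //.
apply/subsetP => a /setIP [aFi aFk]; rewrite !inE aFk andbT.
by apply: contraNneq eFi => <-.
Qed.
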